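(* For every $s\ge1$, the power series $E_s(\mathbf{x})=\Psi_s(\mathbf{x};0)=\sum_{\mathbf{k}\in\mathbb{Z}_{\ge0}^s}V_{\mathbf{k}}\frac{\mathbf{x}^{\mathbf{k}}}{\mathbf{k}!}$, where $V_{\mathbf{k}}$ is the number of $0$-dimensional faces of $\Gamma_{\mathbf{k}}$, satisfies $$\Big(\frac{\partial^s}{\partial x_1\cdots\partial x_s}-\prod_{i=1}^{s-1}\Big(\frac{\partial}{\partial x_i}+\frac{\partial}{\partial x_{i+1}}\Big)\Big)E_s(\mathbf{x})=0.$$
   Context: Ladder diagrams: $Q^+$ is the directed graph on $\mathbb{Z}_{\ge0}^2$ with edges $((i,j),(i,j+1))$ and $((i,j),(i+1,j))$. For a sequence $\mathbf{k}=(k_1,\dots,k_s)$ of positive integers with sum $n$, let $n_0=0$, $n_i=\sum_{j\le i}k_j$, $T_{\mathbf{k}}=\{(n_\ell,n-n_\ell):0\le\ell\le s\}$, and $\Gamma_{\mathbf{k}}$ the induced subgraph of $Q^+$ on $\{(a,b):a\le c,b\le d\text{ for some }(c,d)\in T_{\mathbf{k}}\}$. For nonnegative sequences, $\Gamma_{\mathbf{k}}$ is $\Gamma$ of the subsequence of positive entries (single vertex $(0,0)$ if all entries are zero). A positive path is a shortest directed path from $(0,0)$ to a vertex of $T_{\mathbf{k}}$; a face of $\Gamma_{\mathbf{k}}$ is a subgraph containing all of $T_{\mathbf{k}}$ that is a union of positive paths; its dimension is $\operatorname{rank}H_1$ of it as a 1-dimensional CW complex. $F_{\mathbf{k}}(t)=\sum_\gamma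 t^{\dim\gamma}$ over faces, and $\Psi_s(\mathbf{x};t)=\sum_{\mathbf{k}\in\mathbb{Z}_{\ge0}^s}F_{\mathbf{k}}(t)\frac{\mathbf{x}^{\mathbf{k}}}{\mathbf{k}!}$ with $\mathbf{x}^{\mathbf{k}}=x_1^{k_1}\cdots x_s^{k_s}$, $\mathbf{k}!=k_1!\cdots k_s!$. Thus $V_{\mathbf{k}}=F_{\mathbf{k}}(0)$, which by Theorem 1.1 equals the number of vertices of the corresponding Gelfand–Cetlin polytope. *)

From mathcomp Require Import all_boot all_order all_algebra.
Set Implicit Arguments. Unset Strict Implicit. Unset Printing Implicit Defensive.
Import GRing.Theory.
Local Open Scope ring_scope.

(* Vertices of Q^+ inside the box [0,n]x[0,n]; every Gamma_k with sum k = n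
   lives in this box. *)
Definition vtx (n : nat) := ('I_n.+1 * 'I_n.+1)%type.
Definition pt (n a b : nat) : vtx n := (inord a, inord b).

Definition psum (k : seq nat) (l : nat) : nat := sumn (take l k).

Definition Tset (k : seq nat) : {set vtx (sumn k)} :=
  [set pt (sumn k) (psum k l) (sumn k - psum k l) | l : 'I_(size k).+1].

(* A directed path in Q^+ from (0,0) whose endpoint lies in T_k has length
   exactly n (all points of T_k lie on a + b = n); it is encoded by its word of
   n steps: false = step (i,j)->(i+1,j), true = step (i,j)->(i,j+1). *)
Definition pos (n : nat) (w : n.-tuple bool) (j : nat) : vtx n :=
  pt n (count negb (take j w)) (count id (take j w)).

Definition pathV (n : nat) (w : n.-tuple bool) : {set vtx n} :=
  [set pos w j | j : 'I_n.+1].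
Definition pathE (n : nat) (w : n.-tuple bool) : {set (vtx n * vtx n)} :=
  [set (pos w j, pos w j.+1) | j : 'I_n].

Definition pospath (k : seq nat) (w : (sumn k).-tuple bool) : bool :=
  pos w (sumn k) \in Tset k.

Definition subgraph (n : nat) := ({set vtx n} * {set (vtx n * vtx n)})%type.

Definition is_face (k : seq nat) (H : subgraph (sumn k)) : bool :=
  [exists P : {set (sumn k).-tuple bool},
    [&& [forall w in P, @pospath k w],
        H == (\bigcup_(w in P) pathV w, \bigcup_(w in P) pathE w) &
        Tset k \subset H.1]].

(* cellular boundary map d_1 : Q^{E(H)} -> Q^{V} (row-vector convention),
   d_1(u -> v) = v - u *)
Definition bdry (n : nat) (H : subgraph n) : 'M[rat]_(#|H.2|, #|{: vtx n}|) :=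
  \matrix_(i, j)
    (((enum_val j == (enum_val i).2)%:R : rat) - (enum_val j == (enum_val i).1)%:R).

(* dim = rank H_1 of the 1-dimensional CW complex H = dim_Q ker d_1
   (there are no 2-cells, so H_1 = ker d_1; rank over Z = dim over Q) *)
Definition face_dim (n : nat) (H : subgraph n) : nat := \rank (kermx (bdry H)).

Definition Vcount (k : seq nat) : nat :=
  #|[set H : subgraph (sumn k) | @is_face k H && (face_dim H == 0%N)]|.

(* A series is its coefficient function: f m = coefficient of x^m. *)
Definition mindex (s : nat) := {ffun 'I_s -> nat}.
Definition series (s : nat) := mindex s -> rat.

Definition incr (s : nat) (m : mindex s) (i : 'I_s) : mindex s :=
  [ffun j => (m j + (j == i))%N].

Definition pderiv (s : nat) (i : 'I_s) (f : series s) : series s :=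
  fun m => ((m i).+1)%:R * f (incr m i).

Definition sadd (s : nat) (f g : series s) : series s := fun m => f m + g m.

Definition Eseries (s : nat) : series s :=
  fun m => (Vcount [seq m i | i <- enum 'I_s])%:R / (\prod_(i < s) (m i)`!)%:R.

Definition Dall (s : nat) (f : series s.+1) : series s.+1 :=
  foldr (@pderiv s.+1) f (enum 'I_s.+1).

(* prod_{i=1}^{s} (d/dx_i + d/dx_{i+1})  (for s.+1 variables, 0-indexed) *)
Definition Dprod (s : nat) (f : series s.+1) : series s.+1 :=
  foldr (fun (i : 'I_s) g =>
           sadd (pderiv (widen_ord (leqnSn s) i) g) (pderiv (lift ord0 i) g))
        f (enum 'I_s).

(* A 0-dimensional face of Gamma_k has no cycles, so it is a tree: a family of positive
   paths, one to each point of T_k, any two of which coincide up to any common vertex.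
   When k = (m_1+1, ..., m_(s+1)+1) has no zero part, cutting the last step of every path
   is a bijection onto the trees of the compositions child_comp m d of n - 1, where
   d in {0,1}^s records the directions of the last steps into the s interior points of
   T_k (the last steps into the two extreme points are forced).  Hence
   V_(m+1) = sum_d V_(child_comp m d), and this is the coefficient identity expressing
   d_1 ... d_(s+1) E = prod_i (d_i + d_(i+1)) E once the product is expanded by choosing
   d_i or d_(i+1) in each factor. *)

From mathcomp Require Import all_boot all_order all_algebra.
From mathcomp Require Import zify.
From mathcomp.algebra_tactics Require Import ring.
Set Implicit Arguments. Unset Strict Implicit. Unset Printing Implicit Defensive.
Import GRing.Theory Num.Theory.

Definition walk (w : seq bool) (j : nat) : nat * nat :=
  (count negb (take j w), count id (take j w)).

Lemma walk0 w : walk w 0 = (0, 0)%N.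
Proof. by rewrite /walk take0. Qed.

Lemma walk_sum w j : j <= size w -> (walk w j).1 + (walk w j).2 = j.
Proof. by move=> hj; rewrite addnC /= count_predC size_takel. Qed.

Lemma walkS w j : j < size w ->
  walk w j.+1 = if nth false w j then ((walk w j).1, (walk w j).2.+1)
                else ((walk w j).1.+1, (walk w j).2).
Proof.
move=> hj; rewrite /walk (take_nth false hj) -cats1 !count_cat /=.
by case: (nth false w j); rewrite /= ?addn0 ?addn1.
Qed.

Lemma walk_take w i j : i <= j -> walk (take j w) i = walk w i.
Proof. by move=> hij; rewrite /walk take_takel. Qed.

Lemma walk_eq_take w1 w2 i j :
  take j w1 = take j w2 -> i <= j -> walk w1 i = walk w2 i.
Proof. by move=> e hij; rewrite -(walk_take w1 hij) -(walk_take w2 hij) e. Qed.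

Lemma eq_take_walk w1 w2 j : j <= size w1 -> j <= size w2 ->
  (forall i, i <= j -> walk w1 i = walk w2 i) -> take j w1 = take j w2.
Proof.
move=> h1 h2 e; apply: (eq_from_nth (x0 := false)); first by rewrite !size_takel.
move=> i; rewrite size_takel // => hi; rewrite !nth_take //.
have := e i.+1 hi; rewrite (walkS (leq_trans hi h1)) (walkS (leq_trans hi h2)).
rewrite (e i (ltnW hi)).
by case: (nth false w1 i); case: (nth false w2 i) => // -[]; lia.
Qed.

Lemma walk_le w j : j <= size w -> ((walk w j).1 <= j) && ((walk w j).2 <= j).
Proof. by move=> /walk_sum; case: (walk w j) => a b /= <-; rewrite leq_addr leq_addl. Qed.

Lemma posE n (w : n.-tuple bool) j : pos w j = pt n (walk w j).1 (walk w j).2.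
Proof. by []. Qed.

Definition level n (v : vtx n) : nat := v.1 + v.2.

Lemma pt_val n a b : a <= n -> b <= n -> (pt n a b).1 = a :> nat /\ (pt n a b).2 = b :> nat.
Proof. by move=> ha hb; rewrite /pt /= !inordK. Qed.

Lemma pos_val n (w : n.-tuple bool) j : j <= n ->
  (pos w j).1 = (walk w j).1 :> nat /\ (pos w j).2 = (walk w j).2 :> nat.
Proof.
move=> hj; have hw : j <= size w by rewrite size_tuple.
by have /andP[h1 h2] := walk_le hw; apply: pt_val; apply: leq_trans hj.
Qed.

Lemma walk_pos_pt n (w : n.-tuple bool) j a b : j <= n -> a <= n -> b <= n ->
  pos w j = pt n a b -> walk w j = (a, b).
Proof.
move=> hj ha hb e; have [e1 e2] := pt_val ha hb; have [f1 f2] := pos_val w hj.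
by rewrite [walk w j]surjective_pairing -f1 -f2 e e1 e2.
Qed.

Lemma level_pos n (w : n.-tuple bool) j : j <= n -> level (pos w j) = j.
Proof.
move=> hj; rewrite /level; have [-> ->] := pos_val w hj.
by apply: walk_sum; rewrite size_tuple.
Qed.

Lemma pos_inj n (w1 w2 : n.-tuple bool) j1 j2 : j1 <= n -> j2 <= n ->
  pos w1 j1 = pos w2 j2 -> walk w1 j1 = walk w2 j2 /\ j1 = j2.
Proof.
move=> h1 h2 e; split; last by rewrite -(level_pos w1 h1) -(level_pos w2 h2) e.
have [a1 b1] := pos_val w1 h1; have [a2 b2] := pos_val w2 h2.
rewrite e in a1 b1.
by rewrite [walk w1 j1]surjective_pairing [walk w2 j2]surjective_pairing -a1 -b1 a2 b2.
Qed.

Definition path_union n (P : {set n.-tuple bool}) : subgraph n :=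
  (\bigcup_(w in P) pathV w, \bigcup_(w in P) pathE w).

Lemma path_unionE n (P : {set n.-tuple bool}) e : e \in (path_union P).2 ->
  exists w, exists j : 'I_n, w \in P /\ e = (pos w j, pos w j.+1).
Proof. by case/bigcupP => w wP /imsetP [j _ ->]; exists w, j. Qed.

Lemma path_union_edge_level n (P : {set n.-tuple bool}) e : e \in (path_union P).2 ->
  level e.2 = (level e.1).+1 /\ level e.2 <= n.
Proof. by case/path_unionE => w [j [_ ->]] /=; rewrite !level_pos ?ltn_ord // ltnW. Qed.

(* The union of a family of paths is a tree iff paths meeting at a vertex agree before it. *)
Definition tree_family n (P : {set n.-tuple bool}) : bool :=
  [forall w1 in P, forall w2 in P, forall j : 'I_n.+1,
     (walk w1 j == walk w2 j) ==> (take j w1 == take j w2)].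

Lemma tree_familyP n (P : {set n.-tuple bool}) :
  reflect (forall w1 w2 j, w1 \in P -> w2 \in P -> j <= n ->
             walk w1 j = walk w2 j -> take j w1 = take j w2)
          (tree_family P).
Proof.
apply: (iffP idP) => [/forall_inP h w1 w2 j h1 h2 hj e | h].
  have /forall_inP/(_ w2 h2)/forallP/(_ (Ordinal (hj : j < n.+1))) := h w1 h1.
  by rewrite /= e eqxx => /eqP.
apply/forall_inP => w1 h1; apply/forall_inP => w2 h2; apply/forallP => j.
by apply/implyP => /eqP e; apply/eqP/h; rewrite // -ltnS.
Qed.

Lemma tree_family_end n (P : {set n.-tuple bool}) w w' :
  tree_family P -> w \in P -> w' \in P -> walk w n = walk w' n -> w = w'.
Proof.
move=> /tree_familyP tP wP wP' e; have := tP _ _ _ wP wP' (leqnn n) e.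
by rewrite !take_oversize ?size_tuple // => /val_inj.
Qed.

Lemma tree_union_in_edge_uniq n (P : {set n.-tuple bool}) e e' : tree_family P ->
  e \in (path_union P).2 -> e' \in (path_union P).2 -> e.2 = e'.2 -> e = e'.
Proof.
move=> /tree_familyP tP /path_unionE [w [j [wP ->]]] /path_unionE [w' [j' [wP' ->]]] /= h.
have [hw [jj]] := pos_inj (ltn_ord j) (ltn_ord j') h.
rewrite -jj in hw *.
have hp := walk_eq_take (tP _ _ _ wP wP' (ltn_ord j) hw) (leqnSn j).
by rewrite !posE hp hw.
Qed.

Local Open Scope ring_scope.

Definition incidence n (v : vtx n) (e : vtx n * vtx n) : rat :=
  (v == e.2)%:R - (v == e.1)%:R.

Lemma face_dim_eq0P n (H : subgraph n) :
  reflect (forall x : 'rV[rat]_#|H.2|, x *m bdry H = 0 -> x = 0) (face_dim H == 0)%N.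
Proof.
rewrite /face_dim mxrank_eq0; apply: (iffP eqP) => [k0 x hx | h].
  have : (x <= kermx (bdry H))%MS by rewrite sub_kermx hx.
  by rewrite k0 submx0 => /eqP.
apply/row_matrixP => i; rewrite row0; apply: h.
by apply/eqP; rewrite -sub_kermx row_sub.
Qed.

Lemma mul_bdry n (H : subgraph n) (x : 'rV[rat]_#|H.2|) c :
  (x *m bdry H) 0 c = \sum_(i < #|H.2|) x 0 i * incidence (enum_val c) (enum_val i).
Proof. by rewrite !mxE; apply: eq_bigr => i _; rewrite mxE. Qed.

Lemma tree_family_face_dim0 n (P : {set n.-tuple bool}) :
  tree_family P -> (face_dim (path_union P) == 0)%N.
Proof.
move=> tP; apply/face_dim_eq0P => x hx; set H := path_union P.
(* Each vertex has at most one entering edge, so the boundary of x at the head of an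
   edge e is x_e minus the values of x on edges one level higher: induct downwards. *)
suff h L (i : 'I_#|H.2|) : (n - level (enum_val i).2 < L)%N -> x 0 i = 0.
  by apply/rowP => i; rewrite mxE; apply: (h n.+1); rewrite ltnS leq_subr.
elim: L i => // L IH i hL; set e := enum_val i.
have eH : e \in H.2 := enum_valP i.
have [hl hn] := path_union_edge_level eH.
have eT : e.2 \in {: vtx n} by [].
have hc c : (x *m bdry H) 0 c = 0 by rewrite hx mxE.
have := hc (enum_rank_in eT e.2).
rewrite mul_bdry enum_rankK_in // (bigD1 i) // big1 ?addr0.
  rewrite /incidence eqxx.
  have -> : (e.2 == e.1) = false by apply/negbTE/eqP => h; move: hl; rewrite h; lia.
  by rewrite /= mulr1n mulr0n subr0 mulr1.
move=> i' ne; have e'H : enum_val i' \in H.2 := enum_valP i'.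
rewrite /incidence; case: (eqVneq e.2 (enum_val i').2) => [h2|h2].
  by move: ne; rewrite (enum_val_inj (tree_union_in_edge_uniq tP eH e'H h2)) eqxx.
case: (eqVneq e.2 (enum_val i').1) => [h1|h1]; last by rewrite subrr mulr0.
have [hl' hn'] := path_union_edge_level e'H.
rewrite (IH i') ?mul0r //.
have h3 : level (enum_val i').1 = level e.2 by rewrite h1.
move: hL h3 hl' hn'; rewrite /e; clear; lia.
Qed.

Definition prefix_edges n (w : n.-tuple bool) (j : nat) : {set vtx n * vtx n} :=
  [set (pos w i, pos w i.+1) | i : 'I_n & (i < j)%N].

Lemma prefix_edges_sub n (P : {set n.-tuple bool}) w j :
  w \in P -> prefix_edges w j \subset (path_union P).2.
Proof.
move=> wP; apply/subsetP => f /imsetP [i _ ->]; apply/bigcupP; exists w => //.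
by apply/imsetP; exists i.
Qed.

Lemma sum_incidence_prefix n (E : {set vtx n * vtx n}) (w : n.-tuple bool) j v :
  (j <= n)%N -> prefix_edges w j \subset E ->
  \sum_(f in E) (f \in prefix_edges w j)%:R * incidence v f =
    (v == pos w j)%:R - (v == pos w 0)%:R.
Proof.
move=> hj sE.
rewrite (eq_bigr (fun f => if f \in prefix_edges w j then incidence v f else 0)); last first.
  by move=> f _; case: (f \in _); rewrite ?mul1r ?mul0r.
rewrite -big_mkcondr.
rewrite (eq_bigl (mem (prefix_edges w j))) => [|f]; last first.
  by apply/andP/idP => [[]//|fE]; split=> //; apply: (subsetP sE).
rewrite big_imset /= => [|i i' _ _ /(congr1 fst) /= h]; last first.
  exact/val_inj/(pos_inj (ltnW (ltn_ord i)) (ltnW (ltn_ord i')) h).2.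
rewrite (eq_bigl (fun i : 'I_n => (i < j)%N)) => [|i]; last by rewrite inE.
rewrite -(big_ord_widen n (fun i => incidence v (pos w i, pos w i.+1))) //.
rewrite -(big_mkord xpredT (fun i => incidence v (pos w i, pos w i.+1))).
exact: (telescope_sumr_eq (fun i => (v == pos w i)%:R)).
Qed.

Lemma face_dim0_tree_family n (P : {set n.-tuple bool}) :
  (face_dim (path_union P) == 0)%N -> tree_family P.
Proof.
move=> /face_dim_eq0P hk; apply/tree_familyP => w1 w2 j h1 h2 hj e.
set H := path_union P.
pose y f : rat := (f \in prefix_edges w1 j)%:R - (f \in prefix_edges w2 j)%:R.
pose x : 'rV[rat]_#|H.2| := \row_i y (enum_val i).
(* The two prefixes run from the origin to the same vertex: their difference is a cycle. *)
have hx : x *m bdry H = 0.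
  apply/rowP => c; rewrite mul_bdry mxE.
  under eq_bigr do rewrite mxE.
  rewrite -(big_enum_val (fun f => y f * incidence (enum_val c) f)) /y.
  under eq_bigr do rewrite mulrBl.
  by rewrite sumrB !sum_incidence_prefix ?prefix_edges_sub // !posE e !walk0 subrr.
have yE f : f \in H.2 -> y f = 0.
  move=> fH; have : x 0 (enum_rank_in fH f) = 0 by rewrite (hk x hx) mxE.
  by rewrite !mxE enum_rankK_in.
have steps i : (i < j)%N -> walk w1 i.+1 = walk w2 i.+1.
  move=> hi; have hin : (i < n)%N := leq_trans hi hj.
  have f1 : (pos w1 i, pos w1 i.+1) \in prefix_edges w1 j.
    by apply/imsetP; exists (Ordinal hin); rewrite ?inE.
  have : (pos w1 i, pos w1 i.+1) \in prefix_edges w2 j.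
    have := yE _ (subsetP (prefix_edges_sub j h1) _ f1); rewrite /y f1.
    by case: (_ \in prefix_edges w2 j) => //; rewrite subr0 => /eqP; rewrite oner_eq0.
  case/imsetP => i' _ /(congr1 snd) /= h.
  by have [-> [->]] := pos_inj hin (ltn_ord i') h.
apply: eq_take_walk; rewrite ?size_tuple // => -[|i] hi; first by rewrite !walk0.
exact: steps.
Qed.

Lemma tree_union_path_uniq n (P : {set n.-tuple bool}) (w w' : n.-tuple bool) :
  tree_family P -> pathE w' \subset (path_union P).2 -> w \in P ->
  walk w n = walk w' n -> w = w'.
Proof.
move=> tP sub wP hn.
(* Walk back along w': the edge entering each vertex of w' belongs to a path of P,
   which by the tree property coincides with w up to that vertex. *)
suff h L : (L <= n)%N -> walk w (n - L) = walk w' (n - L).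
  have ht : take n w = take n w'.
    apply: eq_take_walk; rewrite ?size_tuple // => i hi.
    by have := h (n - i)%N (leq_subr _ _); rewrite subKn.
  by apply: val_inj; rewrite /= -(take_oversize (s := w) (n := n)) ?size_tuple // ht
    take_oversize ?size_tuple.
elim: L => [|L IH] hL; first by rewrite subn0.
have jn : (n - L.+1 < n)%N by lia.
set j := (n - L.+1)%N in jn *.
have j1 : j.+1 = (n - L)%N by rewrite /j; lia.
have : (pos w' j, pos w' j.+1) \in (path_union P).2.
  by apply: (subsetP sub); apply/imsetP; exists (Ordinal jn).
case/path_unionE => u [i [uP /pair_equal_spec [h0 h1]]].
have [hp [hij]] := pos_inj jn (ltn_ord i) h1; rewrite -hij in h0 hp.
have hu : walk u j.+1 = walk w j.+1 by rewrite -hp j1 IH // ltnW.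
have ht := (tree_familyP _ tP) _ _ _ uP wP (ltn_ord (Ordinal jn)) hu.
have [hp0 _] := pos_inj (ltnW jn) (ltnW jn) h0.
by rewrite hp0 (walk_eq_take ht (leqnSn _)).
Qed.

Local Close Scope ring_scope.

Definition tpoint n (k : seq nat) (l : nat) : nat * nat := (psum k l, n - psum k l).

Definition vertex_family n (k : seq nat) (P : {set n.-tuple bool}) : bool :=
  [&& [forall w in P, [exists l : 'I_(size k).+1, walk w n == tpoint n k l]],
      [forall l : 'I_(size k).+1, [exists w in P, walk w n == tpoint n k l]] &
      tree_family P].

Arguments vertex_family : clear implicits.

Lemma vertex_familyP n k (P : {set n.-tuple bool}) :
  reflect [/\ forall w, w \in P -> exists2 l, l <= size k & walk w n = tpoint n k l,
              forall l, l <= size k -> exists2 w, w \in P & walk w n = tpoint n k l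
            & tree_family P]
          (vertex_family n k P).
Proof.
apply: (iffP and3P) => -[ends reach tP]; split=> //.
- move=> w wP; have /forall_inP/(_ w wP)/existsP [l /eqP e] := ends.
  by exists l; rewrite // -ltnS.
- move=> l hl; have /forallP/(_ (Ordinal (hl : l < (size k).+1)))/exists_inP := reach.
  by case=> w wP /eqP e; exists w.
- apply/forall_inP => w /ends [l hl e]; apply/existsP.
  by exists (Ordinal (hl : l < (size k).+1)); rewrite e.
- apply/forallP => l; have [w wP e] := reach l (leq_ord l).
  by apply/exists_inP; exists w; rewrite ?e.
Qed.

Definition nvertex_families n k := #|[set P : {set n.-tuple bool} | vertex_family n k P]|.

Lemma psum_le k l : psum k l <= sumn k.
Proof. by rewrite /psum -{2}(cat_take_drop l k) sumn_cat leq_addr. Qed.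

Lemma pospathE k (w : (sumn k).-tuple bool) :
  pospath w = [exists l : 'I_(size k).+1, walk w (sumn k) == tpoint (sumn k) k l].
Proof.
apply/imsetP/existsP => [[l _ h] | [l /eqP h]]; exists l => //; last by rewrite posE h.
by rewrite (walk_pos_pt (leqnn _) (psum_le k l) (leq_subr _ _) h).
Qed.

Lemma vertex_family_face k (P : {set (sumn k).-tuple bool}) :
  vertex_family (sumn k) k P -> is_face (path_union P) && (face_dim (path_union P) == 0).
Proof.
case/vertex_familyP => ends reach tP; rewrite tree_family_face_dim0 // andbT.
apply/existsP; exists P; apply/and3P; split => //.
  by apply/forall_inP => w /ends [l hl e]; rewrite pospathE; apply/existsP;
     exists (Ordinal (hl : l < (size k).+1)); rewrite e.
apply/subsetP => _ /imsetP [l _ ->]; have [w wP hw] := reach l (leq_ord l).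
apply/bigcupP; exists w => //; apply/imsetP; exists ord_max => //.
by rewrite posE (_ : nat_of_ord (@ord_max (sumn k)) = sumn k) // hw.
Qed.

Lemma face_vertex_family k (H : subgraph (sumn k)) :
  is_face H -> face_dim H = 0 -> exists2 P, vertex_family (sumn k) k P & H = path_union P.
Proof.
case/existsP => P /and3P [/forall_inP pP /eqP eH hT] hd.
have {}eH : H = path_union P := eH; exists P => //.
apply/vertex_familyP; split; last by apply: face_dim0_tree_family; rewrite -eH hd.
  move=> w /pP; rewrite pospathE => /existsP [l /eqP e].
  by exists l; rewrite // -ltnS.
move=> l hl; pose v := pt (sumn k) (psum k l) (sumn k - psum k l).
have : v \in H.1 by apply/(subsetP hT)/imsetP; exists (Ordinal (hl : l < (size k).+1)).
rewrite eH => /bigcupP [w wP /imsetP [j _ hj]]; exists w => //.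
have [e1 e2] := pt_val (psum_le k l) (leq_subr (psum k l) (sumn k)).
have hjn : j = sumn k :> nat.
  by rewrite -(level_pos w (leq_ord j)) -hj /level e1 e2 subnKC // psum_le.
have -> : walk w (sumn k) = walk w j by rewrite hjn.
exact: walk_pos_pt (leq_ord j) (psum_le k l) (leq_subr _ _) (esym hj).
Qed.

Lemma vertex_family_union_inj n k (P1 P2 : {set n.-tuple bool}) :
  vertex_family n k P1 -> vertex_family n k P2 -> path_union P1 = path_union P2 -> P1 = P2.
Proof.
suff sub Q1 Q2 : vertex_family n k Q1 -> vertex_family n k Q2 ->
    path_union Q1 = path_union Q2 -> Q1 \subset Q2.
  by move=> g1 g2 e; apply/eqP; rewrite eqEsubset !sub.
case/vertex_familyP => ends1 _ tP1 /vertex_familyP [_ reach2 _] e.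
apply/subsetP => w wP; have [l hl hw] := ends1 w wP.
(* The path of Q2 ending where w ends lies in the tree union of Q1, hence equals w. *)
have [w' wP' hw'] := reach2 l hl.
have sub : pathE w' \subset (path_union Q1).2.
  by rewrite e; apply/subsetP => f fw; apply/bigcupP; exists w'.
by rewrite (tree_union_path_uniq tP1 sub wP) // hw hw'.
Qed.

Lemma Vcount_vertex_families k : Vcount k = nvertex_families (sumn k) k.
Proof.
rewrite /Vcount /nvertex_families.
have -> : [set H | is_face H && (face_dim H == 0)] =
          @path_union (sumn k) @: [set P | vertex_family (sumn k) k P].
  apply/setP => H; rewrite inE; apply/idP/imsetP.
    by case/andP => f /eqP d; have [P g ->] := face_vertex_family f d; exists P; rewrite ?inE.
  by case=> P; rewrite inE => g ->; apply: vertex_family_face.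
apply: card_in_imset => P1 P2; rewrite !inE; exact: vertex_family_union_inj.
Qed.

Lemma tbelast_size n (w : n.+1.-tuple bool) : size (take n w) == n.
Proof. by rewrite size_takel ?size_tuple. Qed.

Definition tbelast n (w : n.+1.-tuple bool) : n.-tuple bool := Tuple (tbelast_size w).

Lemma tbelast_rcons n (w : n.-tuple bool) b : tbelast (rcons_tuple w b) = w.
Proof.
apply: val_inj; rewrite /= -cats1 takel_cat ?size_tuple //.
by rewrite take_oversize ?size_tuple.
Qed.

Lemma nth_rcons_tuple n (w : n.-tuple bool) b : nth false (rcons_tuple w b) n = b.
Proof. by rewrite /= nth_rcons size_tuple ltnn eqxx. Qed.

Lemma rcons_tbelast n (w : n.+1.-tuple bool) : rcons_tuple (tbelast w) (nth false w n) = w.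
Proof. by apply: val_inj; rewrite /= -take_nth ?size_tuple // take_oversize ?size_tuple. Qed.

Lemma walk_tbelast n (w : n.+1.-tuple bool) j : j <= n -> walk (tbelast w) j = walk w j.
Proof. exact: walk_take. Qed.

Lemma walk_last n (w : n.+1.-tuple bool) :
  walk w n.+1 = if nth false w n then ((walk (tbelast w) n).1, (walk (tbelast w) n).2.+1)
                else ((walk (tbelast w) n).1.+1, (walk (tbelast w) n).2).
Proof. by rewrite walk_tbelast // walkS // size_tuple. Qed.

Lemma psumS k l : l < size k -> psum k l.+1 = psum k l + nth 0 k l.
Proof. by move=> hl; rewrite /psum (take_nth 0 hl) -cats1 sumn_cat /= addn0. Qed.

Lemma psum_inj k l l' : all (fun x => 0 < x) k -> l <= size k -> l' <= size k ->
  psum k l = psum k l' -> l = l'.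
Proof.
move=> /allP pos.
suff lt i j : i < j -> j <= size k -> psum k i < psum k j.
  by move=> h1 h2 e; case: (ltngtP l l') => // h; [have := lt _ _ h h2 | have := lt _ _ h h1];
     rewrite e ltnn.
elim: j => // j IH hij hj; rewrite psumS //.
have : 0 < nth 0 k j by apply/pos/mem_nth.
by move: hij; rewrite ltnS leq_eqVlt => /orP [/eqP -> | /IH /(_ (ltnW hj))]; lia.
Qed.

(* Direction of the last step into the l-th point of T_k: vertical (true) for l = 0,
   horizontal for l = size d + 1 (nth past the end), and d_l in between. *)
Definition last_step (d : seq bool) (l : nat) : bool := nth false (true :: d) l.

(* Cutting the last steps, given by d, of paths into T_(m_1+1, ..., m_(s+1)+1) moves the
   l-th point of T to the l-th point of T_(child_comp m d). *)
Definition child_comp (ml : seq nat) (d : seq bool) : seq nat :=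
  [seq nth 0 ml i + last_step d i.+1 + ~~ last_step d i | i <- iota 0 (size ml)].

Lemma size_child_comp ml d : size (child_comp ml d) = size ml.
Proof. by rewrite size_map size_iota. Qed.

Lemma nth_child_comp ml d i : i < size ml ->
  nth 0 (child_comp ml d) i = nth 0 ml i + last_step d i.+1 + ~~ last_step d i.
Proof. by move=> hi; rewrite (nth_map 0) ?size_iota // nth_iota. Qed.

Lemma psum_child_comp ml d l : l <= size ml ->
  psum (child_comp ml d) l + 1 = psum (map S ml) l + last_step d l.
Proof.
elim: l => [|l IH] hl; first by rewrite /psum !take0.
rewrite psumS ?size_child_comp // psumS ?size_map // nth_child_comp // (nth_map 0) //.
by have := IH (ltnW hl); case: (last_step d l); case: (last_step d l.+1) => /=; lia.
Qed.

Lemma last_step_end d : last_step d (size d).+1 = false.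
Proof. by rewrite /last_step /= nth_default. Qed.

Lemma sumn_child_comp ml d s : size ml = s.+1 -> size d = s ->
  sumn (child_comp ml d) + 1 = sumn (map S ml).
Proof.
move=> hm hd; have := psum_child_comp d (leqnn (size ml)).
rewrite /psum -{1}(size_child_comp ml d) !take_size -(size_map S ml) take_size.
by rewrite size_map hm -hd last_step_end addn0.
Qed.

Fixpoint bitseqs (s : nat) : seq (seq bool) :=
  if s is s'.+1 then [seq true :: b | b <- bitseqs s'] ++ [seq false :: b | b <- bitseqs s']
  else [:: [::]].

Lemma mem_bitseqs s b : (b \in bitseqs s) = (size b == s).
Proof.
elim: s b => [|s IH] [|x b] //=; rewrite mem_cat.
  by apply/negbTE/orP => -[] /mapP [].
have cons_inj c : injective (cons c) by move=> ? ? [].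
case: x; rewrite (mem_map (cons_inj _ _)) IH eqSS.
  by case: mapP => [[? _ []] | _] //; rewrite orbF.
by case: mapP => [[? _ []] | _].
Qed.

Lemma uniq_bitseqs s : uniq (bitseqs s).
Proof.
elim: s => //= s IH; rewrite cat_uniq !map_inj_uniq //; try by move=> ? ? [].
by rewrite IH /= andbT; apply/hasPn => b /mapP [c _ ->]; apply/mapP => -[].
Qed.

Lemma card_fibres_bitseqs (T : finType) (A : {set T}) (f : T -> seq bool) s :
  (forall x, x \in A -> size (f x) = s) ->
  #|A| = \sum_(d <- bitseqs s) #|[set x in A | f x == d]|.
Proof.
move=> hs; have card_fibre d : #|[set x in A | f x == d]| = \sum_(x in A) (f x == d).
  rewrite -sum1_card big_mkcond [RHS]big_mkcond /=.
  by apply: eq_bigr => x _; rewrite !inE; case: (x \in A); case: (f x == d).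
rewrite (eq_bigr _ (fun d _ => card_fibre d)) exchange_big /= -sum1_card.
apply: eq_bigr => x xA.
rewrite (eq_bigr (fun d => if f x == d then 1 else 0)) // -big_mkcond /= sum1_count.
rewrite (eq_count (a2 := pred1 (f x))) => [|d]; last by rewrite /= eq_sym.
by rewrite count_uniq_mem ?uniq_bitseqs // mem_bitseqs hs ?eqxx.
Qed.

Section LastStepRecursion.

Variables (ml : seq nat) (s n : nat).
Hypotheses (size_ml : size ml = s.+1) (sum_ml : sumn (map S ml) = n.+1).

Local Notation k := (map S ml).

Lemma size_k : size k = s.+1.
Proof. by rewrite size_map. Qed.

Lemma k_pos : all (fun x => 0 < x) k.
Proof. by apply/allP => x /mapP [y _ ->]. Qed.

Lemma walk_tbelast_tpoint d l (w : n.+1.-tuple bool) : l <= s.+1 ->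
  walk w n.+1 = tpoint n.+1 k l -> nth false w n = last_step d l ->
  walk (tbelast w) n = tpoint n (child_comp ml d) l.
Proof.
move=> hl; have := psum_child_comp (ml := ml) d (l := l); rewrite size_ml => /(_ hl) e.
have := psum_le k l; rewrite sum_ml => le.
rewrite walk_last /tpoint; case: (walk (tbelast w) n) => a c /=.
by case: (nth false w n) => /= -[e1 e2] hb; move: e; rewrite -hb /= => e; f_equal; lia.
Qed.

Lemma walk_rcons_tpoint d l (w : n.-tuple bool) : size d = s -> l <= s.+1 ->
  walk w n = tpoint n (child_comp ml d) l ->
  walk (rcons_tuple w (last_step d l)) n.+1 = tpoint n.+1 k l.
Proof.
move=> hd hl; have := psum_child_comp (ml := ml) d (l := l); rewrite size_ml => /(_ hl) e.
have le := psum_le (child_comp ml d) l.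
have := sumn_child_comp size_ml hd; rewrite sum_ml => hs.
have := psum_le k l; rewrite sum_ml => le2.
rewrite walk_last tbelast_rcons nth_rcons_tuple /tpoint => ->.
by move: e; case: (last_step d l) => /= e; f_equal; lia.
Qed.

Lemma last_step_first (w : n.+1.-tuple bool) :
  walk w n.+1 = tpoint n.+1 k 0 -> nth false w n = true.
Proof. by rewrite walk_last /tpoint /psum take0 /=; case: (nth false w n) => // -[]. Qed.

Lemma last_step_final (w : n.+1.-tuple bool) :
  walk w n.+1 = tpoint n.+1 k s.+1 -> nth false w n = false.
Proof.
rewrite walk_last /tpoint /psum -size_k take_size sum_ml subnn.
by case: (nth false w n) => // -[].
Qed.

Definition last_steps (P : {set n.+1.-tuple bool}) : seq bool :=
  [seq [exists w in P, (walk w n.+1 == tpoint n.+1 k i.+1) && nth false w n]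
  | i <- iota 0 s].

Lemma size_last_steps P : size (last_steps P) = s.
Proof. by rewrite size_map size_iota. Qed.

Lemma last_step_last_steps P w l : vertex_family n.+1 k P -> w \in P -> l <= s.+1 ->
  walk w n.+1 = tpoint n.+1 k l -> nth false w n = last_step (last_steps P) l.
Proof.
case/vertex_familyP => _ _ tP wP hl e.
case: l hl e => [|l] hl e; first by rewrite (last_step_first e).
move: hl; rewrite leq_eqVlt => /orP [/eqP [hl] | hl].
  by move: e; rewrite hl => /last_step_final ->; rewrite -(size_last_steps P) last_step_end.
rewrite /last_step /= (nth_map 0) ?size_iota // nth_iota // add0n.
case hb: (nth false w n).
  by apply/esym/exists_inP; exists w; rewrite // e eqxx hb.
(* A path with the same endpoint and a different last step would contradict the tree property. *)
apply/esym/negbTE/exists_inP => -[w' wP' /andP [/eqP e' hb']].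
by move: hb; rewrite (tree_family_end tP wP wP') ?e ?e' ?hb'.
Qed.

Definition extend_family (d : seq bool) (P' : {set n.-tuple bool}) : {set n.+1.-tuple bool} :=
  [set w | (tbelast w \in P') &&
     [exists l : 'I_s.+2, (walk w n.+1 == tpoint n.+1 k l) && (nth false w n == last_step d l)]].

Definition trunc_family (P : {set n.+1.-tuple bool}) : {set n.-tuple bool} := @tbelast n @: P.

Lemma extend_familyP d (P' : {set n.-tuple bool}) (w : n.+1.-tuple bool) :
  reflect (tbelast w \in P' /\
           exists l, [/\ l <= s.+1, walk w n.+1 = tpoint n.+1 k l & nth false w n = last_step d l])
          (w \in extend_family d P').
Proof.
rewrite inE; apply: (iffP andP) => -[wP' h]; split=> //.
  by case/existsP: h => l /andP [/eqP e /eqP f]; exists l; split; rewrite // -ltnS.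
case: h => l [hl e f]; apply/existsP; exists (Ordinal (hl : l < s.+2)).
by rewrite /= e f !eqxx.
Qed.

Lemma trunc_vertex_family P : vertex_family n.+1 k P ->
  vertex_family n (child_comp ml (last_steps P)) (trunc_family P).
Proof.
move=> g; have /vertex_familyP [ends reach tP] := g; rewrite size_k in ends reach.
apply/vertex_familyP; rewrite size_child_comp size_ml; split.
- move=> _ /imsetP [w wP ->]; have [l hl e] := ends w wP.
  by exists l => //; apply: walk_tbelast_tpoint => //; apply: last_step_last_steps.
- move=> l hl; have [w wP e] := reach l hl.
  exists (tbelast w); first exact: imset_f.
  by apply: walk_tbelast_tpoint => //; apply: last_step_last_steps.
- apply/tree_familyP => _ _ j /imsetP [w1 h1 ->] /imsetP [w2 h2 ->] hj.
  rewrite !walk_tbelast // => e.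
  by have := tree_familyP _ tP _ _ _ h1 h2 (leqW hj) e; rewrite /= !take_takel // => ->.
Qed.

Lemma last_step_extend d P' w l : w \in extend_family d P' -> l <= s.+1 ->
  walk w n.+1 = tpoint n.+1 k l -> nth false w n = last_step d l.
Proof.
case/extend_familyP => _ [l' [hl' e' f]] hl e; suff -> : l = l' by [].
by move: e; rewrite e' => -[/esym el _]; apply: (psum_inj k_pos) el; rewrite size_k.
Qed.

Section Extension.

Variables (d : seq bool) (P' : {set n.-tuple bool}).
Hypotheses (size_d : size d = s) (P'_vertex : vertex_family n (child_comp ml d) P').

Lemma extend_vertex_family : vertex_family n.+1 k (extend_family d P').
Proof.
have /vertex_familyP [ends reach tP] := P'_vertex.
rewrite size_child_comp size_ml in ends reach.
apply/vertex_familyP; rewrite size_k; split.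
- by move=> w /extend_familyP [_ [l [hl e _]]]; exists l.
- move=> l hl; have [w' wP e] := reach l hl.
  have e1 := walk_rcons_tpoint size_d hl e.
  exists (rcons_tuple w' (last_step d l)) => //.
  apply/extend_familyP; rewrite tbelast_rcons nth_rcons_tuple; split=> //.
  by exists l.
- apply/tree_familyP => w1 w2 j h1 h2 hj e.
  move: (h1) (h2) => /extend_familyP [t1 [l1 [hl1 e1 f1]]] /extend_familyP [t2 _].
  move: hj; rewrite leq_eqVlt => /orP [/eqP hj | hj]; last first.
    rewrite ltnS in hj; move: e; rewrite -!(walk_tbelast _ hj) => e.
    by have := tree_familyP _ tP _ _ _ t1 t2 hj e; rewrite /= !take_takel.
  subst j; move: (e); rewrite e1 => e2; have f2 := last_step_extend h2 hl1 (esym e2).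
  have := tree_family_end tP t1 t2.
  rewrite (walk_tbelast_tpoint hl1 e1 f1) (walk_tbelast_tpoint hl1 (esym e2) f2).
  by move=> /(_ erefl) tt; rewrite -(rcons_tbelast w1) -(rcons_tbelast w2) tt f1 f2.
Qed.

Lemma last_steps_extend : last_steps (extend_family d P') = d.
Proof.
have /vertex_familyP [_ reach _] := extend_vertex_family.
apply: (eq_from_nth (x0 := false)); first by rewrite size_last_steps size_d.
move=> i; rewrite size_last_steps => hi.
rewrite (nth_map 0) ?size_iota // nth_iota // add0n.
have hl : i.+1 <= size k by rewrite size_k ltnS ltnW.
have -> : nth false d i = last_step d i.+1 by [].
case hb: (last_step d i.+1).
  have [w wP e] := reach _ hl.
  by apply/exists_inP; exists w; rewrite // e eqxx (last_step_extend wP _ e) ?hb // -size_k.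
apply/negbTE/exists_inP => -[w wP /andP [/eqP e hw]].
by move: hw; rewrite (last_step_extend wP _ e) ?hb // -size_k.
Qed.

Lemma trunc_extend_family : trunc_family (extend_family d P') = P'.
Proof.
have /vertex_familyP [ends _ _] := P'_vertex.
apply/setP => w'; apply/imsetP/idP => [[w /extend_familyP [h _] ->] // | wP].
have [l hl e] := ends w' wP; rewrite size_child_comp size_ml in hl.
exists (rcons_tuple w' (last_step d l)); last by rewrite tbelast_rcons.
apply/extend_familyP; rewrite tbelast_rcons nth_rcons_tuple; split=> //.
by exists l; split=> //; apply: walk_rcons_tpoint.
Qed.

End Extension.

Lemma extend_trunc_family P : vertex_family n.+1 k P ->
  extend_family (last_steps P) (trunc_family P) = P.
Proof.
move=> g; have /vertex_familyP [ends reach tP] := g; rewrite size_k in ends reach.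
apply/setP => w; apply/idP/idP => [| wP].
  case/extend_familyP => /imsetP [w0 w0P tw] [l [hl e f]].
  have [wl wlP el] := reach l hl.
  have fl := last_step_last_steps g wlP hl el.
  (* The path of P ending where w ends agrees with w before the last step. *)
  have ht : take n wl = take n w0.
    apply: (tree_familyP _ tP) wlP w0P (leqnSn n) _.
    by rewrite -!walk_tbelast // -tw (walk_tbelast_tpoint hl e f) (walk_tbelast_tpoint hl el fl).
  have twl : tbelast wl = tbelast w by rewrite tw; apply: val_inj.
  by rewrite -(rcons_tbelast w) -twl f -fl rcons_tbelast.
have [l hl e] := ends w wP.
apply/extend_familyP; split; first exact: imset_f.
by exists l; split=> //; apply: last_step_last_steps.
Qed.

Lemma nvertex_families_last_step :
  nvertex_families n.+1 k = \sum_(d <- bitseqs s) nvertex_families n (child_comp ml d).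
Proof.
rewrite /nvertex_families (card_fibres_bitseqs (f := last_steps) (s := s)) => [|P _];
  last exact: size_last_steps.
apply: eq_big_seq => d; rewrite mem_bitseqs => /eqP hd.
set A := [set x in _ | _].
have -> : [set P' | vertex_family n (child_comp ml d) P'] = trunc_family @: A.
  apply/setP => P'; rewrite inE; apply/idP/imsetP => [g | [P]].
    exists (extend_family d P'); last by rewrite trunc_extend_family.
    by rewrite !inE extend_vertex_family // last_steps_extend // eqxx.
  by rewrite !inE => /andP [g /eqP <-] ->; apply: trunc_vertex_family.
rewrite card_in_imset // => P1 P2; rewrite !inE => /andP [g1 /eqP d1] /andP [g2 /eqP d2] e.
by rewrite -(extend_trunc_family g1) -(extend_trunc_family g2) e d1 d2.
Qed.

End LastStepRecursion.

Lemma Vcount_last_step ml s : size ml = s.+1 ->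
  Vcount (map S ml) = \sum_(d <- bitseqs s) Vcount (child_comp ml d).
Proof.
move=> hm; have hpos : 0 < sumn (map S ml) by case: ml hm => //= x ml _; rewrite addSn.
set n := (sumn (map S ml)).-1; have hn : sumn (map S ml) = n.+1 by rewrite prednK.
rewrite Vcount_vertex_families hn (nvertex_families_last_step hm hn).
apply: eq_big_seq => d; rewrite mem_bitseqs => /eqP hd.
have hs : sumn (child_comp ml d) = n by have := sumn_child_comp hm hd; rewrite hn addn1 => -[].
by rewrite Vcount_vertex_families hs.
Qed.

Lemma foldl_incr t (m : mindex t) r : foldl (@incr t) m r = [ffun j => m j + count_mem j r].
Proof.
elim: r m => [|i r IH] m /=; first by apply/ffunP => j; rewrite ffunE addn0.
by rewrite IH; apply/ffunP => j; rewrite !ffunE addnA eq_sym.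
Qed.

Definition mfact t (m : mindex t) : nat := \prod_(i < t) (m i)`!.

Lemma mfact_gt0 t (m : mindex t) : 0 < mfact m.
Proof. by rewrite prodn_gt0 // => i; rewrite fact_gt0. Qed.

Lemma mfact_incr t (m : mindex t) i : mfact (incr m i) = mfact m * (m i).+1.
Proof.
rewrite /mfact (bigD1 i) // [X in _ = X * _](bigD1 i) //= ffunE eqxx addn1 factS.
rewrite (eq_bigr (fun j => (m j)`!)) => [|j /negbTE hj]; last by rewrite ffunE hj addn0.
by rewrite -mulnA mulnC.
Qed.

Local Open Scope ring_scope.

Definition egf t (W : mindex t -> rat) : series t := fun m => W m / (mfact m)%:R.

Lemma pderiv_egf t i (f : series t) W :
  f =1 egf W -> pderiv i f =1 egf (fun m => W (incr m i)).
Proof.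
move=> fW m; rewrite /pderiv fW /egf mfact_incr natrM.
have h1 : (mfact m)%:R != 0 :> rat by rewrite pnatr_eq0 -lt0n mfact_gt0.
have h2 : 1 + (m i)%:R != 0 :> rat by rewrite addrC natr1 pnatr_eq0.
by field; rewrite h1 h2.
Qed.

Lemma foldr_pderiv_egf t (W : mindex t -> rat) r :
  foldr (@pderiv t) (egf W) r =1 egf (fun m => W (foldl (@incr t) m r)).
Proof. by elim: r W => //= i r IH W; apply: pderiv_egf (IH W). Qed.

Section AdjacentPairs.

Variable s : nat.

Local Notation lo := (widen_ord (leqnSn s)).
Local Notation hi := (lift ord0).

Definition Dprod_coef (W : mindex s.+1 -> rat) (r : seq 'I_s) : mindex s.+1 -> rat :=
  foldr (fun i G m => G (incr m (lo i)) + G (incr m (hi i))) W r.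

Lemma foldr_Dprod_egf (W : mindex s.+1 -> rat) r :
  foldr (fun (i : 'I_s) f => sadd (pderiv (lo i) f) (pderiv (hi i) f)) (egf W) r
  =1 egf (Dprod_coef W r).
Proof.
elim: r => //= i r IH m.
by rewrite /sadd !(pderiv_egf _ IH) /egf mulrDl.
Qed.

(* Expanding the product: the bit b_i selects the variable i (true) or i+1 (false). *)
Definition adjacent_pick (r : seq 'I_s) (b : seq bool) : seq 'I_s.+1 :=
  [seq if x.2 then lo x.1 else hi x.1 | x <- zip r b].

Lemma Dprod_coef_sum W r m :
  Dprod_coef W r m = \sum_(b <- bitseqs (size r)) W (foldl (@incr _) m (adjacent_pick r b)).
Proof.
elim: r m => [|i r IH] m /=; first by rewrite big_cons big_nil addr0.
by rewrite !IH big_cat !big_map.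
Qed.

End AdjacentPairs.

Local Close Scope ring_scope.

Definition adjacent_choices (b : seq bool) (a : nat) : seq nat :=
  [seq if x.2 then x.1 else x.1.+1 | x <- zip (iota a (size b)) b].

Lemma count_adjacent_choices_lt b a y : y < a -> count_mem y (adjacent_choices b a) = 0.
Proof.
elim: b a => //= c b IH a ya; rewrite -/(adjacent_choices b a.+1) IH; last exact: ltnW.
by case: c; rewrite /= addn0 ?(gtn_eqF ya) ?(gtn_eqF (ltnW ya : y < a.+1)).
Qed.

Lemma count_adjacent_choices b a x : x <= size b ->
  count_mem (a + x) (adjacent_choices b a) = last_step b x.+1 + ~~ last_step b x.
Proof.
elim: b a x => [|c b IH] a [|x] //= hx; rewrite -/(adjacent_choices b a.+1).
  by rewrite count_adjacent_choices_lt; [case: c; case: eqP => /=; lia | lia].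
rewrite -addSnnS IH //; case: c => /=.
  by rewrite ltn_eqF ?ltn_addr // add0n; case: x hx.
rewrite -{1}(addn0 a.+1) eqn_add2l.
by case: x hx => [|x] _ //=; rewrite addn0 addnC.
Qed.

Lemma map_val_adjacent_pick s (r : seq 'I_s) b :
  map val (adjacent_pick r b) = [seq if x.2 then x.1 else x.1.+1 | x <- zip (map val r) b].
Proof. by elim: r b => [|i r IH] [|c b] //=; rewrite IH; case: c. Qed.

Lemma count_adjacent_pick s (b : seq bool) (j : 'I_s.+1) : size b = s ->
  count_mem j (adjacent_pick (enum 'I_s) b) = last_step b j.+1 + ~~ last_step b j.
Proof.
move=> hb; rewrite -(count_adjacent_choices 0); last by rewrite hb -ltnS.
rewrite add0n /adjacent_choices hb -val_enum_ord -map_val_adjacent_pick [RHS]count_map.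
by apply: eq_count => i; rewrite /= val_eqE.
Qed.

Lemma foldl_incr_enum t (m : mindex t) : foldl (@incr t) m (enum 'I_t) = [ffun j => (m j).+1].
Proof.
by rewrite foldl_incr; apply/ffunP => j; rewrite !ffunE count_uniq_mem ?enum_uniq ?mem_enum ?addn1.
Qed.

Lemma child_comp_adjacent_pick s (m : mindex s.+1) b : size b = s ->
  [seq foldl (@incr _) m (adjacent_pick (enum 'I_s) b) j | j <- enum 'I_s.+1] =
  child_comp [seq m i | i <- enum 'I_s.+1] b.
Proof.
move=> hb; rewrite /child_comp size_map size_enum_ord -val_enum_ord -map_comp.
apply: eq_map => j /=; rewrite foldl_incr ffunE count_adjacent_pick //.
by rewrite (nth_map ord0) ?size_enum_ord // nth_ord_enum addnA.
Qed.

Local Open Scope ring_scope.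

Theorem corollary1p3 (s : nat) (m : mindex s.+1) :
  Dall (@Eseries s.+1) m - Dprod (@Eseries s.+1) m = 0.
Proof.
pose V (m' : mindex s.+1) : rat := (Vcount [seq m' i | i <- enum 'I_s.+1])%:R.
have -> : @Eseries s.+1 = egf V by [].
rewrite /Dall /Dprod foldr_pderiv_egf foldr_Dprod_egf /egf Dprod_coef_sum size_enum_ord.
apply/eqP; rewrite subr_eq0 /V -natr_sum; apply/eqP; congr (_%:R / _).
rewrite foldl_incr_enum -map_comp (eq_map (g := S \o m)) => [|i]; last by rewrite /= ffunE.
rewrite map_comp -enumT (Vcount_last_step (s := s)); last by rewrite size_map -?enumT size_enum_ord.
apply: eq_big_seq => d; rewrite mem_bitseqs => /eqP hd.
by rewrite child_comp_adjacent_pick.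
Qed.
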